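(* For $n\ge3$: $\mathrm{St}(\mathfrak a_0(n))=\{I,X\}^{\otimes n}\cup\{Y,Z\}^{\otimes n}$; $\mathrm{St}(\mathfrak a_2(n))=\{P_I,P_{XY},P_{YX},P_Z\}$; $\mathrm{St}(\mathfrak a_3(n))=\mathrm{St}(\mathfrak a_6(n))=\{P_I,P_X,P_{YZ},P_{ZY}\}$; $\mathrm{St}(\mathfrak a_4(n))=\mathrm{St}(\mathfrak a_7(n))=\{P_I,P_X,P_Y,P_Z\}$; $\mathrm{St}(\mathfrak a_5(n))=\mathrm{St}(\mathfrak a_{10}(n))=\{P_I,P_{XYZ},P_{YZX},P_{ZXY}\}$; $\mathrm{St}(\mathfrak a_8(n))=\{P_I,P_Y,X_1,ZY\cdots Y\}$ (the last being $Z$ followed by $n-1$ copies of $Y$); $\mathrm{St}(\mathfrak a_9(n))=\{P_I,X_1,Y_1X_2,Z_1X_2\}$; $\mathrm{St}(\mathfrak a_{13}(n))=\mathrm{St}(\mathfrak a_{20}(n))=\{P_I,P_X\}$; $\mathrm{St}(\mathfrak a_{14}(n))=\{P_I,P_Z\}$; $\mathrm{St}(\mathfrak a_{15}(n))=\mathrm{St}(\mathfrak b_2(n))=\mathrm{St}(\mathfrak b_4(n))=\{P_I,X_1\}$; $\mathrm{St}(\mathfrak b_0(n))=\mathrm{St}(\mathfrak b_1(n))=\{I,X\}^{\otimes n}$; $\mathrm{St}(\mathfrak a_k(n))=\mathrm{St}(\mathfrak b_3(n))=\{P_I\}$ for $k\in\{11,12,16,17,18,19,21,22\}$.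
   Context: Pauli matrices $I,X,Y,Z$; $\mathcal P_n$ is the set of length-$n$ Pauli strings $A^1\otimes\cdots\otimes A^n$, $A^j\in\{I,X,Y,Z\}$. $A_j$ denotes $A$ at position $j$ and $I$ elsewhere; $A_iB_j$ the string with $A$ at $i$, $B$ at $j$, $I$ elsewhere. For a word $w$ over $\{I,X,Y,Z\}$, $P_w\in\mathcal P_n$ is the periodic repetition $www\cdots$ truncated to length $n$ (e.g. $P_I=I^{\otimes n}$, $P_X=X^{\otimes n}$, $P_{YZ}=YZYZ\cdots$). The stabilizer $\mathrm{St}(\mathfrak s)$ of a set $\mathfrak s$ of matrices is the set of all $P\in\mathcal P_n$ commuting with every element of $\mathfrak s$. For a set $S$ of Pauli strings, $\mathrm{Lie}\langle S\rangle$ is the smallest real Lie subalgebra of $\mathfrak u(2^n)$ containing $\{iP:P\in S\}$; for a set $G$ of two-qubit strings, $G(n)=\mathrm{Lie}\langle A_jB_{j+1}: AB\in G,1\le j\le n-1\rangle$. Generating sets: $\mathfrak a_0=\{XX\}$, $\mathfrak a_2=\{XY,YX\}$, $\mathfrak a_3=\{XX,YZ\}$, $\mathfrak a_4=\{XX,YY\}$, $\mathfrak a_5=\{XY,YZ\}$, $\mathfrak a_6=\{XX,YZ,ZY\}$, $\mathfrak a_7=\{XX,YY,ZZ\}$, $\mathfrak a_8=\{XX,XZ\}$, $\mathfrak a_9=\{XY,XZ\}$, $\mathfrak a_{10}=\{XY,YZ,ZX\}$, $\mathfrak a_{11}=\{XY,YX,YZ\}$, $\mathfrak a_{12}=\{XX,XY,YZ\}$,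 $\mathfrak a_{13}=\{XX,YY,YZ\}$, $\mathfrak a_{14}=\{XX,YY,XY\}$, $\mathfrak a_{15}=\{XX,XY,XZ\}$, $\mathfrak a_{16}=\{XY,YX,YZ,ZY\}$, $\mathfrak a_{17}=\{XX,XY,ZX\}$, $\mathfrak a_{18}=\{XX,XZ,YY,ZY\}$, $\mathfrak a_{19}=\{XX,XY,ZX,YZ\}$, $\mathfrak a_{20}=\{XX,YY,ZZ,ZY\}$, $\mathfrak a_{21}=\{XX,YY,XY,ZX\}$, $\mathfrak a_{22}=\{XX,XY,XZ,YX\}$, $\mathfrak b_0=\{XI,IX\}$, $\mathfrak b_1=\{XX,XI,IX\}$, $\mathfrak b_2=\{XY,XI,IX\}$, $\mathfrak b_3=\{XI,YI,IX,IY\}$, $\mathfrak b_4=\{XX,XY,XI,IX\}$. *)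

From HB Require Import structures.
From mathcomp Require Import all_boot all_order all_algebra all_field.
Set Implicit Arguments. Unset Strict Implicit. Unset Printing Implicit Defensive.
Import Order.TTheory GRing.Theory Num.Theory.
Local Open Scope ring_scope.

Inductive pauli := pI | pX | pY | pZ.

Definition pauli_code (p : pauli) : 'I_4 :=
  match p with pI => inord 0 | pX => inord 1 | pY => inord 2 | pZ => inord 3 end.
Definition pauli_decode (i : 'I_4) : pauli :=
  match val i with 0 => pI | 1 => pX | 2 => pY | _ => pZ end%N.
Lemma pauli_codeK : cancel pauli_code pauli_decode.
Proof. by case; rewrite /pauli_decode /= inordK. Qed.
HB.instance Definition _ := Finite.copy pauli (can_type pauli_codeK).

Definition pstring (n : nat) := 'I_n -> pauli.

(* Single-qubit Pauli matrices, entries indexed by (row bit, column bit). *)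
Definition pmat (p : pauli) (a b : bool) : algC :=
  match p with
  | pI => if a == b then 1 else 0
  | pX => if a == b then 0 else 1
  | pY => if a == b then 0 else (if a then 'i else - 'i)
  | pZ => if a == b then (if a then -1 else 1) else 0
  end.

Definition qbit (i k : nat) : bool := odd (i %/ 2 ^ k).

(* The 2^n x 2^n matrix A^1 (x) ... (x) A^n (qubit k <-> bit k of the index). *)
Definition pmx n (P : pstring n) : 'M[algC]_(2 ^ n) :=
  \matrix_(i, j) \prod_(k < n) pmat (P k) (qbit i k) (qbit j k).

Definition skew_herm N (A : 'M[algC]_N) : Prop := (map_mx Num.conj A)^T = - A.

Definition lie_subalg N (L : 'M[algC]_N -> Prop) : Prop :=
  [/\ (forall A, L A -> skew_herm A),
      L 0,
      (forall A B, L A -> L B -> L (A + B)),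
      (forall (r : algC) A, r \is Num.real -> L A -> L (r *: A))
    & (forall A B, L A -> L B -> L (A *m B - B *m A))].

(* Lie<S>: the smallest real Lie subalgebra of u(2^n) containing iP, P in S. *)
Definition inLie n (S : pstring n -> Prop) (M : 'M[algC]_(2 ^ n)) : Prop :=
  forall L, lie_subalg L -> (forall P, S P -> L ('i *: pmx P)) -> L M.

Definition St n (s : 'M[algC]_(2 ^ n) -> Prop) (P : pstring n) : Prop :=
  forall M, s M -> pmx P *m M = M *m pmx P.

(* Generators A_j B_{j+1}, AB in G, 1 <= j <= n-1 (0-based: j.+1 < n). *)
Definition gen_set n (G : seq (pauli * pauli)) (P : pstring n) : Prop :=
  exists A B (j : nat), (A, B) \in G /\ (j.+1 < n)%N /\
    forall k : 'I_n, P k = (if val k == j then A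
                            else if val k == j.+1 then B else pI).

Definition Gn (G : seq (pauli * pauli)) n : 'M[algC]_(2 ^ n) -> Prop :=
  inLie (@gen_set n G).
Arguments Gn G n : clear implicits.

Definition isPw n (w : seq pauli) (P : pstring n) : Prop :=
  forall k : 'I_n, P k = nth pI w (k %% size w).

Definition letters_in n (A : seq pauli) (P : pstring n) : Prop :=
  forall k : 'I_n, P k \in A.

(* P agrees with the explicit word w (I-padded): e.g. X_1 = [:: pX], Y_1X_2 = [:: pY; pX]. *)
Definition isWord n (w : seq pauli) (P : pstring n) : Prop :=
  forall k : 'I_n, P k = nth pI w k.

Definition isZYY n (P : pstring n) : Prop :=
  forall k : 'I_n, P k = (if val k == 0%N then pZ else pY).

Definition a0  := [:: (pX,pX)].
Definition a2  := [:: (pX,pY); (pY,pX)].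
Definition a3  := [:: (pX,pX); (pY,pZ)].
Definition a4  := [:: (pX,pX); (pY,pY)].
Definition a5  := [:: (pX,pY); (pY,pZ)].
Definition a6  := [:: (pX,pX); (pY,pZ); (pZ,pY)].
Definition a7  := [:: (pX,pX); (pY,pY); (pZ,pZ)].
Definition a8  := [:: (pX,pX); (pX,pZ)].
Definition a9  := [:: (pX,pY); (pX,pZ)].
Definition a10 := [:: (pX,pY); (pY,pZ); (pZ,pX)].
Definition a11 := [:: (pX,pY); (pY,pX); (pY,pZ)].
Definition a12 := [:: (pX,pX); (pX,pY); (pY,pZ)].
Definition a13 := [:: (pX,pX); (pY,pY); (pY,pZ)].
Definition a14 := [:: (pX,pX); (pY,pY); (pX,pY)].
Definition a15 := [:: (pX,pX); (pX,pY); (pX,pZ)].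
Definition a16 := [:: (pX,pY); (pY,pX); (pY,pZ); (pZ,pY)].
Definition a17 := [:: (pX,pX); (pX,pY); (pZ,pX)].
Definition a18 := [:: (pX,pX); (pX,pZ); (pY,pY); (pZ,pY)].
Definition a19 := [:: (pX,pX); (pX,pY); (pZ,pX); (pY,pZ)].
Definition a20 := [:: (pX,pX); (pY,pY); (pZ,pZ); (pZ,pY)].
Definition a21 := [:: (pX,pX); (pY,pY); (pX,pY); (pZ,pX)].
Definition a22 := [:: (pX,pX); (pX,pY); (pX,pZ); (pY,pX)].
Definition b0  := [:: (pX,pI); (pI,pX)].
Definition b1  := [:: (pX,pX); (pX,pI); (pI,pX)].
Definition b2  := [:: (pX,pY); (pX,pI); (pI,pX)].
Definition b3  := [:: (pX,pI); (pY,pI); (pI,pX); (pI,pY)].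
Definition b4  := [:: (pX,pX); (pX,pY); (pX,pI); (pI,pX)].

(* A Pauli string squares to the identity and commutes or anticommutes with
   another one according to the parity of the number of positions where their
   letters anticommute.  Since the centralizer of a matrix in u(2^n) is a Lie
   subalgebra, P stabilizes G(n) iff it commutes with every generator A_j B_(j+1),
   which is a condition on each pair of consecutive letters of P: they must be
   related by a "transfer" relation determined by G.  Except for a0, b0 and b1
   this relation is functional, so a stabilizer is determined by its first
   letter, and each letter either starts an explicit eventually periodic
   infinite walk or starts no walk of length 3; both facts are checked by
   evaluation. *)

From HB Require Import structures.
From mathcomp Require Import all_boot all_order all_algebra all_field.
From mathcomp Require Import ring.
Set Implicit Arguments. Unset Strict Implicit. Unset Printing Implicit Defensive.
Import Order.TTheory GRing.Theory Num.Theory.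
Local Open Scope ring_scope.

Definition anticomm (a b : pauli) : bool :=
  match a, b with
  | pI, _ | _, pI | pX, pX | pY, pY | pZ, pZ => false
  | _, _ => true
  end.

Lemma anticomm0 a : anticomm a pI = false. Proof. by case: a. Qed.

Definition pmat_mul (a b : pauli) (x y : bool) : algC :=
  pmat a x false * pmat b false y + pmat a x true * pmat b true y.

Lemma pmat_mulC a b x y :
  pmat_mul a b x y = (-1) ^+ anticomm a b * pmat_mul b a x y.
Proof. by case: a; case: b; case: x; case: y; rewrite /pmat_mul /=; ring. Qed.

Lemma pmat_mulss a x y : pmat_mul a a x y = (x == y)%:R.
Proof.
by case: a; case: x; case: y; rewrite /pmat_mul /= ?mulrN ?mulNr ?mulCii ?opprK; ring.
Qed.

Lemma qbit0 i : qbit i 0 = odd i.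
Proof. by rewrite /qbit expn0 divn1. Qed.

Lemma qbitS i k : qbit i k.+1 = qbit i./2 k.
Proof. by rewrite /qbit expnS divnMA divn2. Qed.

(* Entries of [pmx] and of products of two [pmx], indexed by [nat] so that
   induction on [n] can peel off qubit 0, the lowest bit of the index. *)
Definition tensor_entry n (p : nat -> pauli) (i j : nat) : algC :=
  \prod_(k < n) pmat (p k) (qbit i k) (qbit j k).

Definition tensor_mul_entry n (p q : nat -> pauli) (i j : nat) : algC :=
  \sum_(l < 2 ^ n) tensor_entry n p i l * tensor_entry n q l j.

Lemma tensor_entryS n p i j : tensor_entry n.+1 p i j =
  pmat (p 0%N) (odd i) (odd j) * tensor_entry n (p \o succn) i./2 j./2.
Proof.
rewrite /tensor_entry big_ord_recl !qbit0; congr (_ * _).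
by apply: eq_bigr => k _; rewrite /= !qbitS.
Qed.

Lemma sum_double (F : nat -> algC) m :
  \sum_(l < 2 * m) F l = \sum_(l < m) (F l.*2 + F l.*2.+1).
Proof.
rewrite -(big_mkord xpredT F) -(big_mkord xpredT (fun l => F l.*2 + F l.*2.+1)).
elim: m => [|m IH]; first by rewrite muln0 !big_nil.
by rewrite mulnS !big_nat_recr //= IH -mul2n addrA.
Qed.

Lemma tensor_mul_entryS n p q i j : tensor_mul_entry n.+1 p q i j =
  pmat_mul (p 0%N) (q 0%N) (odd i) (odd j) *
  tensor_mul_entry n (p \o succn) (q \o succn) i./2 j./2.
Proof.
rewrite /tensor_mul_entry expnS.
rewrite (sum_double (fun l => tensor_entry n.+1 p i l * tensor_entry n.+1 q l j)).
rewrite /pmat_mul mulr_sumr.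
apply: eq_bigr => l _; rewrite !tensor_entryS /= odd_double doubleK uphalf_double.
ring.
Qed.

Lemma tensor_mul_entryC n p q i j : tensor_mul_entry n p q i j =
  (-1) ^+ (\sum_(k < n) anticomm (p k) (q k))%N * tensor_mul_entry n q p i j.
Proof.
elim: n p q i j => [|n IH] p q i j.
  by rewrite big_ord0 mul1r /tensor_mul_entry /tensor_entry !big_ord1 !big_ord0.
rewrite !tensor_mul_entryS IH pmat_mulC big_ord_recl exprD.
by rewrite -!mulrA; congr (_ * _); exact: mulrCA.
Qed.

Lemma tensor_mul_entryss n p i j : (i < 2 ^ n)%N -> (j < 2 ^ n)%N ->
  tensor_mul_entry n p p i j = (i == j)%:R.
Proof.
elim: n p i j => [|n IH] p i j.
  rewrite expn0 !ltnS !leqn0 => /eqP-> /eqP->.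
  by rewrite /tensor_mul_entry /tensor_entry big_ord1 !big_ord0 mul1r.
rewrite expnS !mul2n -!ltn_half_double => hi hj.
rewrite tensor_mul_entryS pmat_mulss IH // -natrM mulnb.
congr (nat_of_bool _)%:R; apply/idP/eqP => [/andP[/eqP hodd /eqP hhalf]|-> ].
  by rewrite -(odd_double_half i) hodd hhalf odd_double_half.
by rewrite !eqxx.
Qed.

(* Letter [k] of [P], with [I] beyond the end of the string. *)
Definition letter n (P : pstring n) (k : nat) : pauli :=
  if insub k is Some i then P i else pI.

Lemma letterE n (P : pstring n) (i : 'I_n) : letter P i = P i.
Proof. by rewrite /letter valK. Qed.

Definition anticomm_count n (P Q : pstring n) : nat := (\sum_(k < n) anticomm (P k) (Q k))%N.

Lemma pmxE n (P : pstring n) (i j : 'I_(2 ^ n)) : pmx P i j = tensor_entry n (letter P) i j.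
Proof. by rewrite mxE; apply: eq_bigr => k _; rewrite letterE. Qed.

Lemma pmx_mulE n (P Q : pstring n) (i j : 'I_(2 ^ n)) :
  (pmx P *m pmx Q) i j = tensor_mul_entry n (letter P) (letter Q) i j.
Proof. by rewrite mxE; apply: eq_bigr => l _; rewrite !pmxE. Qed.

Lemma pmx_mulC n (P Q : pstring n) :
  pmx P *m pmx Q = (-1) ^+ anticomm_count P Q *: (pmx Q *m pmx P).
Proof.
apply/matrixP => i j; rewrite [RHS]mxE !pmx_mulE tensor_mul_entryC.
by congr (_ ^+ _ * _); apply: eq_bigr => k _; rewrite !letterE.
Qed.

Lemma pmx_mulss n (P : pstring n) : pmx P *m pmx P = 1%:M.
Proof. by apply/matrixP => i j; rewrite pmx_mulE tensor_mul_entryss // mxE. Qed.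

Lemma pmx_commute n (P Q : pstring n) :
  pmx P *m pmx Q = pmx Q *m pmx P <-> ~~ odd (anticomm_count P Q).
Proof.
rewrite pmx_mulC -signr_odd; case: odd => /=; last by rewrite expr0 scale1r.
split=> // hPQ; have hQP : pmx Q *m pmx P *m (pmx P *m pmx Q) = 1%:M.
  by rewrite mulmxA -(mulmxA (pmx Q)) pmx_mulss mulmx1 pmx_mulss.
have dim_gt0 : (0 < 2 ^ n)%N by rewrite expn_gt0.
have /matrixP/(_ (Ordinal dim_gt0) (Ordinal dim_gt0)) :
    (-1) ^+ 1 *: (pmx Q *m pmx P) *m (pmx P *m pmx Q) = 1%:M.
  by rewrite hPQ hQP.
rewrite -scalemxAl hQP expr1 scaleN1r !mxE eqxx /=.
by move/eqP; rewrite -subr_eq0 -opprD oppr_eq0 -mulr2n pnatr_eq0.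
Qed.

Lemma skew_hermE N (A : 'M[algC]_N) :
  skew_herm A <-> forall i j, (A j i)^* = - A i j.
Proof.
split=> [hA i j | hA]; last by apply/matrixP => i j; rewrite !mxE.
by have /matrixP/(_ i j) := hA; rewrite !mxE.
Qed.

Lemma pmx_conj n (P : pstring n) i j : (pmx P j i)^* = pmx P i j.
Proof.
rewrite !mxE rmorph_prod; apply: eq_bigr => k _.
case: (P k); case: (qbit i k); case: (qbit j k) => /=.
all: by rewrite ?rmorphN /= ?conjC0 ?conjC1 ?conjCi ?opprK.
Qed.

Lemma skew_herm_pmx n (P : pstring n) : skew_herm ('i *: pmx P).
Proof.
by apply/skew_hermE => i j; rewrite mxE [in RHS]mxE rmorphM /= conjCi pmx_conj mulNr.
Qed.

Lemma lie_subalg_centralizer N (C : 'M[algC]_N) :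
  lie_subalg (fun A => skew_herm A /\ C *m A = A *m C).
Proof.
split=> [A [] // | | A B [/skew_hermE hA cA] [/skew_hermE hB cB]
        | r A hr [/skew_hermE hA cA] | A B [/skew_hermE hA cA] [/skew_hermE hB cB]].
- split; last by rewrite mulmx0 mul0mx.
  by apply/skew_hermE => i j; rewrite !mxE rmorph0 oppr0.
- split; last by rewrite mulmxDr mulmxDl cA cB.
  by apply/skew_hermE => i j; rewrite !mxE rmorphD /= hA hB opprD.
- split; last by rewrite -scalemxAr cA scalemxAl.
  by apply/skew_hermE => i j; rewrite !mxE rmorphM /= hA conj_Creal // mulrN.
- split; last by rewrite mulmxBr mulmxBl !mulmxA cA cB -!mulmxA cB cA.
  apply/skew_hermE => i j; rewrite !mxE rmorphB !rmorph_sum /= opprB.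
  by congr (_ - _); apply: eq_bigr => k _; rewrite rmorphM /= hA hB mulrNN mulrC.
Qed.

Lemma St_inLie n (S : pstring n -> Prop) (P : pstring n) :
  St (inLie S) P <-> forall Q, S Q -> pmx P *m pmx Q = pmx Q *m pmx P.
Proof.
split=> [hP Q SQ | hP M LieM].
  have := hP _ (fun L _ LQ => LQ Q SQ).
  rewrite -scalemxAr -scalemxAl => /(congr1 ( *:%R 'i^-1)).
  by rewrite !scalerA mulVf ?neq0Ci // !scale1r.
apply: (proj2 (LieM _ (lie_subalg_centralizer (pmx P)) _)) => Q SQ.
by split; [exact: skew_herm_pmx | rewrite -scalemxAr -scalemxAl hP].
Qed.

Definition two_site n (A B : pauli) (j : nat) : pstring n :=
  fun k => if val k == j then A else if val k == j.+1 then B else pI.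

Lemma anticomm_count_two_site n (P Q : pstring n) A B j : (j.+1 < n)%N ->
  Q =1 two_site A B j ->
  anticomm_count P Q = (anticomm (letter P j) A + anticomm (letter P j.+1) B)%N.
Proof.
move=> hj hQ; have hj' := ltnW hj.
rewrite /anticomm_count (bigD1 (Ordinal hj')) // (bigD1 (Ordinal hj)) /=; last first.
  by rewrite -val_eqE /= gtn_eqF.
rewrite big1 => [|k /andP[]]; rewrite !hQ /two_site /=.
  rewrite eqxx gtn_eqF // eqxx addn0.
  by rewrite -(letterE P (Ordinal hj')) -(letterE P (Ordinal hj)).
by rewrite -!val_eqE /= => /negbTE-> /negbTE->; rewrite anticomm0.
Qed.

(* [P] commutes with [A_j B_(j+1)] iff its letters at [j] and [j+1]
   anticommute with [A] and [B] respectively both or neither. *)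
Definition transfer (G : seq (pauli * pauli)) : rel pauli :=
  fun x y => all (fun ab => anticomm x ab.1 == anticomm y ab.2) G.

Definition walk (R : rel pauli) n (p : nat -> pauli) : Prop :=
  forall j, (j.+1 < n)%N -> R (p j) (p j.+1).

Lemma St_Gn n G (P : pstring n) : St (Gn G n) P <-> walk (transfer G) n (letter P).
Proof.
have commute_two_site Q A B j : (j.+1 < n)%N -> Q =1 two_site A B j ->
    pmx P *m pmx Q = pmx Q *m pmx P <->
    anticomm (letter P j) A = anticomm (letter P j.+1) B.
  move=> hj hQ; rewrite pmx_commute (anticomm_count_two_site _ hj hQ) oddD !oddb.
  by case: anticomm; case: anticomm.
rewrite /Gn St_inLie; split=> [hP j hj | hP Q [A [B [j [GAB [hj hQ]]]]]].
  apply/allP=> -[A B] GAB; apply/eqP/(commute_two_site _ A B j hj) => //.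
  by apply: hP; exists A, B, j.
by apply/(commute_two_site _ A B j hj hQ)/eqP; exact: (allP (hP j hj) _ GAB).
Qed.

Lemma walk_prefix3 (R : rel pauli) n p : (2 < n)%N -> walk R n p ->
  R (p 0%N) (p 1%N) && R (p 1%N) (p 2%N).
Proof. by move=> hn W; rewrite !W // ltnW. Qed.

Definition paulis : seq pauli := [:: pI; pX; pY; pZ].

Lemma mem_paulis x : x \in paulis.
Proof. by case: x; rewrite !inE eqxx ?orbT. Qed.

(* Unlike [==] on [pauli], which goes through the opaque [insub] of its
   ordinal code, this test reduces, so that [classifies] below can be
   decided by evaluation. *)
Definition pauli_eqb (a b : pauli) : bool :=
  match a, b with pI, pI | pX, pX | pY, pY | pZ, pZ => true | _, _ => false end.

Lemma pauli_eqbP a b : reflect (a = b) (pauli_eqb a b).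
Proof. by apply: (iffP idP) => [|->]; case: a; case: b. Qed.

Definition functional_rel (R : rel pauli) : bool :=
  all (fun x => all (fun y => all (fun z => R x y ==> R x z ==> pauli_eqb y z) paulis) paulis)
      paulis.

Lemma walk_functional (R : rel pauli) n p s : functional_rel R ->
  (forall k, R (s k) (s k.+1)) -> walk R n p -> p 0%N = s 0%N ->
  forall k, (k < n)%N -> p k = s k.
Proof.
move=> /allP funR walk_s walk_p p0; elim=> [//|k IH] hk.
have /allP/(_ _ (mem_paulis (p k.+1)))/allP/(_ _ (mem_paulis (s k.+1))) :=
  funR _ (mem_paulis (p k)).
by rewrite walk_p // IH ?walk_s ?(ltnW hk) //= => /pauli_eqbP.
Qed.

Lemma walk_agree (R : rel pauli) n p s :
  (forall k, R (s k) (s k.+1)) -> (forall k, (k < n)%N -> p k = s k) -> walk R n p.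
Proof. by move=> walk_s ps j hj; rewrite !ps // ltnW. Qed.

Inductive pattern := Periodic of seq pauli | Padded of seq pauli | Headed of pauli & pauli.

Definition pattern_seq (c : pattern) : nat -> pauli :=
  match c with
  | Periodic w => fun k => nth pI w (k %% size w)
  | Padded w => nth pI w
  | Headed a b => fun k => if k == 0%N then a else b
  end.

Definition pattern_code (c : pattern) : seq pauli + seq pauli + pauli * pauli :=
  match c with
  | Periodic w => inl (inl w) | Padded w => inl (inr w) | Headed a b => inr (a, b)
  end.

Definition pattern_decode (x : seq pauli + seq pauli + pauli * pauli) : pattern :=
  match x with
  | inl (inl w) => Periodic w | inl (inr w) => Padded w | inr (a, b) => Headed a b
  end.

Lemma pattern_codeK : cancel pattern_code pattern_decode. Proof. by case. Qed.

HB.instance Definition _ := Equality.copy pattern (can_type pattern_codeK).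

(* Checking the transitions within one period, resp. within the word, suffices. *)
Definition pattern_walkb (R : rel pauli) (c : pattern) : bool :=
  match c with
  | Periodic w => (0 < size w)%N &&
      all (fun r => R (nth pI w r) (nth pI w (r.+1 %% size w))) (iota 0 (size w))
  | Padded w => R pI pI && all (fun r => R (nth pI w r) (nth pI w r.+1)) (iota 0 (size w))
  | Headed a b => R a b && R b b
  end.

Lemma pattern_walkbP (R : rel pauli) c : pattern_walkb R c ->
  forall k, R (pattern_seq c k) (pattern_seq c k.+1).
Proof.
case: c => [w /andP[w_gt0 /allP Rw] | w /andP[RII /allP Rw] | a b /andP[Rab Rbb]] k /=.
- rewrite -addn1 -modnDml addn1; apply: Rw.
  by rewrite mem_iota ltn_pmod.
- case: (ltnP k (size w)) => [hk|hk]; first by apply: Rw; rewrite mem_iota.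
  by rewrite !nth_default // ltnW.
- by case: k.
Qed.

(* A condition decidable by evaluation under which the [R]-walks of length at
   least 3 are exactly the prefixes of the candidates [cs]. *)
Definition classifies (R : rel pauli) (cs : seq pattern) : bool :=
  [&& functional_rel R, all (pattern_walkb R) cs &
      all (fun x => has (fun c => pauli_eqb (pattern_seq c 0) x) cs ||
                    ~~ has (fun y => R x y && has (R y) paulis) paulis) paulis].

Lemma walk_classify (R : rel pauli) cs n p : (2 < n)%N -> classifies R cs ->
  walk R n p <-> exists2 c, c \in cs & forall k, (k < n)%N -> p k = pattern_seq c k.
Proof.
move=> hn /and3P[funR /allP walk_cs /allP cover]; split=> [W | [c c_cs pc]].
  case/orP: (cover _ (mem_paulis (p 0%N))) =>
    [/hasP[c c_cs /pauli_eqbP c0] | /hasPn stuck].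
    exists c => //; apply: walk_functional W _ => //; exact/pattern_walkbP/walk_cs.
  have /andP[R01 R12] := walk_prefix3 hn W.
  case/negP: (stuck _ (mem_paulis (p 1%N))); rewrite R01.
  by apply/hasP; exists (p 2%N); rewrite ?mem_paulis.
by apply: walk_agree pc; exact/pattern_walkbP/walk_cs.
Qed.

Lemma forall_letterE n (P : pstring n) (Q : pauli -> nat -> Prop) :
  (forall k : 'I_n, Q (P k) k) <-> forall k, (k < n)%N -> Q (letter P k) k.
Proof.
split=> [QP k hk | QP k]; last by rewrite -(letterE P k); apply: QP.
by have := QP (Ordinal hk); rewrite -(letterE P (Ordinal hk)).
Qed.

Definition agrees n (P : pstring n) (s : nat -> pauli) : Prop := forall k : 'I_n, P k = s k.

Lemma agreesE n (P : pstring n) s :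
  agrees P s <-> forall k, (k < n)%N -> letter P k = s k.
Proof. exact: (forall_letterE P (fun x k => x = s k)). Qed.

Lemma St_classify G cs n (P : pstring n) : (2 < n)%N -> classifies (transfer G) cs ->
  St (Gn G n) P <-> exists2 c, c \in cs & agrees P (pattern_seq c).
Proof.
move=> hn Gcs; rewrite St_Gn (walk_classify _ hn Gcs).
by split=> -[c c_cs /agreesE Pc]; exists c => //; apply/agreesE.
Qed.

Lemma St_classify1 G n (P : pstring n) c : (2 < n)%N ->
  classifies (transfer G) [:: c] -> St (Gn G n) P <-> agrees P (pattern_seq c).
Proof.
move=> hn Gcs; rewrite (St_classify _ hn Gcs).
by split=> [[c' /[!inE] /eqP ->] | Pc]; last exists c; rewrite ?inE.
Qed.

Lemma St_classify2 G n (P : pstring n) c1 c2 : (2 < n)%N ->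
  classifies (transfer G) [:: c1; c2] ->
  St (Gn G n) P <-> agrees P (pattern_seq c1) \/ agrees P (pattern_seq c2).
Proof.
move=> hn Gcs; rewrite (St_classify _ hn Gcs); split.
  by case=> c /[!inE] /orP[] /eqP ->; [left | right].
by case=> Pc; [exists c1 | exists c2]; rewrite ?inE ?eqxx ?orbT.
Qed.

Lemma St_classify4 G n (P : pstring n) c1 c2 c3 c4 : (2 < n)%N ->
  classifies (transfer G) [:: c1; c2; c3; c4] ->
  St (Gn G n) P <-> [\/ agrees P (pattern_seq c1), agrees P (pattern_seq c2),
                        agrees P (pattern_seq c3) | agrees P (pattern_seq c4)].
Proof.
move=> hn Gcs; rewrite (St_classify _ hn Gcs); split.
  by case=> c /[!inE] /or4P[] /eqP ->;
    [apply: Or41 | apply: Or42 | apply: Or43 | apply: Or44].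
by case=> Pc; [exists c1 | exists c2 | exists c3 | exists c4]; rewrite ?inE ?eqxx ?orbT.
Qed.

Lemma walk_eq_fun (R : rel pauli) (f : pauli -> bool) n p :
  R =2 (fun x y => f x == f y) ->
  walk R n p <-> forall k, (k < n)%N -> f (p k) = f (p 0%N).
Proof.
move=> Rf; split=> [W | fp j hj]; last by rewrite Rf !fp // ltnW.
by elim=> [//|k IH] hk; rewrite -IH ?(ltnW hk) //; apply/esym/eqP; rewrite -Rf W.
Qed.

Lemma walk_both (R : rel pauli) (a : pred pauli) n p : (1 < n)%N ->
  R =2 (fun x y => a x && a y) ->
  walk R n p <-> forall k, (k < n)%N -> a (p k).
Proof.
move=> n_gt1 Ra; split=> [W [|k] hk | ap j hj]; last by rewrite Ra !ap // ltnW.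
  by have := W 0%N n_gt1; rewrite Ra => /andP[].
by have := W k hk; rewrite Ra => /andP[].
Qed.

Lemma mem_IX x : (x \in [:: pI; pX]) = ~~ anticomm x pX.
Proof.
by apply/idP/idP => [/[!inE] /orP[] /eqP -> | ]; case: x; rewrite // !inE eqxx ?orbT.
Qed.

Lemma mem_YZ x : (x \in [:: pY; pZ]) = anticomm x pX.
Proof.
by apply/idP/idP => [/[!inE] /orP[] /eqP -> | ]; case: x; rewrite // !inE eqxx ?orbT.
Qed.

Lemma St_a0 n : (0 < n)%N -> forall P : pstring n, St (Gn a0 n) P <->
  letters_in [:: pI; pX] P \/ letters_in [:: pY; pZ] P.
Proof.
move=> n_gt0 P; rewrite St_Gn (walk_eq_fun (f := anticomm^~ pX)); last first.
  by move=> x y; rewrite /transfer /= andbT.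
rewrite /letters_in !(forall_letterE P (fun x _ => x \in _)).
split=> [fP | [] inP k hk].
- by case f0: (anticomm (letter P 0) pX); [right | left] => k hk;
    rewrite ?mem_IX ?mem_YZ fP // f0.
- by move: (inP k hk) (inP 0%N n_gt0); rewrite !mem_IX => /negbTE-> /negbTE->.
- by move: (inP k hk) (inP 0%N n_gt0); rewrite !mem_YZ => -> ->.
Qed.

Lemma St_b0_b1 n : (1 < n)%N -> forall G, G \in [:: b0; b1] ->
  forall P : pstring n, St (Gn G n) P <-> letters_in [:: pI; pX] P.
Proof.
move=> n_gt1 G G_b01 P; rewrite /letters_in (forall_letterE P (fun x _ => x \in _)).
rewrite St_Gn (walk_both (a := fun x => ~~ anticomm x pX)) //; last first.
  by move=> x y; apply/eqP; move: G G_b01; apply/allP; case: x; case: y.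
by split=> inP k hk; [rewrite mem_IX | rewrite -mem_IX]; apply: inP.
Qed.

Lemma St_a2 n : (2 < n)%N -> forall P : pstring n, St (Gn a2 n) P <->
  [\/ isPw [:: pI] P, isPw [:: pX; pY] P, isPw [:: pY; pX] P | isPw [:: pZ] P].
Proof.
move=> hn P; apply: (St_classify4 (c1 := Periodic [:: pI]) (c2 := Periodic [:: pX; pY])
  (c3 := Periodic [:: pY; pX]) (c4 := Periodic [:: pZ]) P hn).
by [].
Qed.

Lemma St_a3_a6 n : (2 < n)%N -> forall G, G \in [:: a3; a6] -> forall P : pstring n,
  St (Gn G n) P <->
  [\/ isPw [:: pI] P, isPw [:: pX] P, isPw [:: pY; pZ] P | isPw [:: pZ; pY] P].
Proof.
move=> hn G G_a36 P; apply: (St_classify4 (c1 := Periodic [:: pI]) (c2 := Periodic [:: pX])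
  (c3 := Periodic [:: pY; pZ]) (c4 := Periodic [:: pZ; pY]) P hn).
by move: G G_a36; apply/allP.
Qed.

Lemma St_a4_a7 n : (2 < n)%N -> forall G, G \in [:: a4; a7] -> forall P : pstring n,
  St (Gn G n) P <->
  [\/ isPw [:: pI] P, isPw [:: pX] P, isPw [:: pY] P | isPw [:: pZ] P].
Proof.
move=> hn G G_a47 P; apply: (St_classify4 (c1 := Periodic [:: pI]) (c2 := Periodic [:: pX])
  (c3 := Periodic [:: pY]) (c4 := Periodic [:: pZ]) P hn).
by move: G G_a47; apply/allP.
Qed.

Lemma St_a5_a10 n : (2 < n)%N -> forall G, G \in [:: a5; a10] -> forall P : pstring n,
  St (Gn G n) P <->
  [\/ isPw [:: pI] P, isPw [:: pX; pY; pZ] P, isPw [:: pY; pZ; pX] P | isPw [:: pZ; pX; pY] P].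
Proof.
move=> hn G G_a510 P; apply: (St_classify4 (c1 := Periodic [:: pI])
  (c2 := Periodic [:: pX; pY; pZ]) (c3 := Periodic [:: pY; pZ; pX])
  (c4 := Periodic [:: pZ; pX; pY]) P hn).
by move: G G_a510; apply/allP.
Qed.

Lemma St_a8 n : (2 < n)%N -> forall P : pstring n, St (Gn a8 n) P <->
  [\/ isPw [:: pI] P, isPw [:: pY] P, isWord [:: pX] P | isZYY P].
Proof.
move=> hn P; apply: (St_classify4 (c1 := Periodic [:: pI]) (c2 := Periodic [:: pY])
  (c3 := Padded [:: pX]) (c4 := Headed pZ pY) P hn).
by [].
Qed.

Lemma St_a9 n : (2 < n)%N -> forall P : pstring n, St (Gn a9 n) P <->
  [\/ isPw [:: pI] P, isWord [:: pX] P, isWord [:: pY; pX] P | isWord [:: pZ; pX] P].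
Proof.
move=> hn P; apply: (St_classify4 (c1 := Periodic [:: pI]) (c2 := Padded [:: pX])
  (c3 := Padded [:: pY; pX]) (c4 := Padded [:: pZ; pX]) P hn).
by [].
Qed.

Lemma St_a13_a20 n : (2 < n)%N -> forall G, G \in [:: a13; a20] -> forall P : pstring n,
  St (Gn G n) P <-> isPw [:: pI] P \/ isPw [:: pX] P.
Proof.
move=> hn G G_a1320 P.
apply: (St_classify2 (c1 := Periodic [:: pI]) (c2 := Periodic [:: pX]) P hn).
by move: G G_a1320; apply/allP.
Qed.

Lemma St_a14 n : (2 < n)%N -> forall P : pstring n,
  St (Gn a14 n) P <-> isPw [:: pI] P \/ isPw [:: pZ] P.
Proof.
move=> hn P; apply: (St_classify2 (c1 := Periodic [:: pI]) (c2 := Periodic [:: pZ]) P hn).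
by [].
Qed.

Lemma St_a15_b2_b4 n : (2 < n)%N -> forall G, G \in [:: a15; b2; b4] ->
  forall P : pstring n, St (Gn G n) P <-> isPw [:: pI] P \/ isWord [:: pX] P.
Proof.
move=> hn G G_a15b24 P.
apply: (St_classify2 (c1 := Periodic [:: pI]) (c2 := Padded [:: pX]) P hn).
by move: G G_a15b24; apply/allP.
Qed.

Lemma St_trivial n : (2 < n)%N ->
  forall G, G \in [:: a11; a12; a16; a17; a18; a19; a21; a22; b3] ->
  forall P : pstring n, St (Gn G n) P <-> isPw [:: pI] P.
Proof.
move=> hn G G_triv P; apply: (St_classify1 (c := Periodic [:: pI]) P hn).
by move: G G_triv; apply/allP.
Qed.

Theorem mainTheorem8 (n : nat) (hn : (3 <= n)%N) :
  (forall P, St (Gn a0 n) P <->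
     letters_in [:: pI; pX] P \/ letters_in [:: pY; pZ] P) /\
  (forall P, St (Gn a2 n) P <->
     [\/ isPw [:: pI] P, isPw [:: pX; pY] P, isPw [:: pY; pX] P | isPw [:: pZ] P]) /\
  (forall G, G \in [:: a3; a6] -> forall P, St (Gn G n) P <->
     [\/ isPw [:: pI] P, isPw [:: pX] P, isPw [:: pY; pZ] P | isPw [:: pZ; pY] P]) /\
  (forall G, G \in [:: a4; a7] -> forall P, St (Gn G n) P <->
     [\/ isPw [:: pI] P, isPw [:: pX] P, isPw [:: pY] P | isPw [:: pZ] P]) /\
  (forall G, G \in [:: a5; a10] -> forall P, St (Gn G n) P <->
     [\/ isPw [:: pI] P, isPw [:: pX; pY; pZ] P, isPw [:: pY; pZ; pX] P
       | isPw [:: pZ; pX; pY] P]) /\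
  (forall P, St (Gn a8 n) P <->
     [\/ isPw [:: pI] P, isPw [:: pY] P, isWord [:: pX] P | isZYY P]) /\
  (forall P, St (Gn a9 n) P <->
     [\/ isPw [:: pI] P, isWord [:: pX] P, isWord [:: pY; pX] P | isWord [:: pZ; pX] P]) /\
  (forall G, G \in [:: a13; a20] -> forall P, St (Gn G n) P <->
     isPw [:: pI] P \/ isPw [:: pX] P) /\
  (forall P, St (Gn a14 n) P <-> isPw [:: pI] P \/ isPw [:: pZ] P) /\
  (forall G, G \in [:: a15; b2; b4] -> forall P, St (Gn G n) P <->
     isPw [:: pI] P \/ isWord [:: pX] P) /\
  (forall G, G \in [:: b0; b1] -> forall P, St (Gn G n) P <->
     letters_in [:: pI; pX] P) /\
  (forall G, G \in [:: a11; a12; a16; a17; a18; a19; a21; a22; b3] ->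
     forall P, St (Gn G n) P <-> isPw [:: pI] P).
Proof.
have n_gt0 : (0 < n)%N by apply: leq_trans hn.
have n_gt1 : (1 < n)%N by apply: leq_trans hn.
split; first exact: St_a0 n_gt0.
split; first exact: St_a2.
split; first exact: St_a3_a6.
split; first exact: St_a4_a7.
split; first exact: St_a5_a10.
split; first exact: St_a8.
split; first exact: St_a9.
split; first exact: St_a13_a20.
split; first exact: St_a14.
split; first exact: St_a15_b2_b4.
split; first exact: St_b0_b1 n_gt1.
exact: St_trivial.
Qed.
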